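(* Let $p\ge 1$ be an integer, put $m:=2p+1$, and let $\theta:=e^{-\pi i/4}$. For $k=0,1,\dots,4p+1$ let $y_k:=-1+\frac{2k}{4p+1}$ and $\mu_k:=H(y_k)$, where $$H(y):=\int_{\mathbb{R}}\frac{e^{-2\pi x^2+2\pi\theta x y}}{\cosh(\pi\theta x)}\,dx=\frac{1}{\cos(\pi y)}\Big[\sqrt{2}\cos(\pi y/2)\,e^{-\frac{\pi i}{8}(4y^2+1)}-e^{-\frac{\pi i}{4}}\Big].$$ Let $L$ be the linear functional on the space of complex polynomials of degree at most $4p+1$ defined by $L[x^k]=\mu_k$ for $k=0,1,\dots,4p+1$. Let $P_{-1}\equiv 0$, $P_0\equiv 1$, and $P_{n+1}(x)=(x-a_n)P_n(x)-b_nP_{n-1}(x)$ for $n=0,1,\dots,m-1$, where $a_n=L[xP_n^2]/L[P_n^2]$ and $b_n=L[P_n^2]/L[P_{n-1}^2]$ (with $b_0$ arbitrary), and assume that $L[P_n^2]\neq 0$ for $0\le n\le m-1$, so that these monic polynomials are well defined; they satisfy $\deg P_n=n$ and $L[P_nQ]=0$ for every polynomial $Q$ of degree at most $n-1$, $1\le n\le m$. Then the polynomial $P_m$ satisfies $P_m(x)=-x^mP_m(1/x)$ for all $x\neq 0$.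
   Context: $\cosh$ and $\cos$ are the usual complex hyperbolic cosine and cosine; note $y_k\neq\pm 1/2$ for all $k$, so $\mu_k$ is well defined. The polynomials $P_n$ are the monic orthogonal polynomials with respect to the (generally non-positive) functional $L$. *)

From HB Require Import structures.
From mathcomp Require Import all_boot all_order all_algebra.
From mathcomp Require Import complex.
From mathcomp Require Import reals trigo.
Set Implicit Arguments. Unset Strict Implicit. Unset Printing Implicit Defensive.
Import Order.TTheory GRing.Theory Num.Theory.
Local Open Scope ring_scope.
Local Open Scope complex_scope.

Section Defs.
Variable R : realType.

Definition cexpi (t : R) : R[i] := (cos t +i* sin t)%C.

Definition yk (p k : nat) : R := -1 + (2 * k%:R) / (4 * p%:R + 1).

Definition Hc (y : R) : R[i] :=
  ((cos (pi * y))^-1)%:C *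
  ((Num.sqrt 2 * cos (pi * y / 2))%:C * cexpi (- (pi * (4 * y ^+ 2 + 1) / 8))
   - cexpi (- (pi / 4))).

Definition mu (p k : nat) : R[i] := Hc (yk p k).

(* L[Q] = sum_k Q_k mu_k  (only applied to polynomials of degree <= 4p+1) *)
Definition Lfun (p : nat) (Q : {poly R[i]}) : R[i] :=
  \sum_(k < size Q) Q`_k * mu p k.

Fixpoint Ppair (p : nat) (n : nat) : {poly R[i]} * {poly R[i]} :=
  match n with
  | 0 => (0, 1)
  | n'.+1 =>
      let: (Pm1, Pn) := Ppair p n' in
      let an := Lfun p ('X * Pn ^+ 2) / Lfun p (Pn ^+ 2) in
      let bn := if n' is 0 then 0 else Lfun p (Pn ^+ 2) / Lfun p (Pm1 ^+ 2) in
      (Pn, ('X - an%:P) * Pn - bn%:P * Pm1)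
  end.

Definition Pn (p n : nat) : {poly R[i]} := (Ppair p n).2.

End Defs.

(* Since H is even, the moments satisfy mu_k = mu_(4p+1-k), so the Hankel
   matrices A = (mu_(i+j)) and B = (mu_(i+j+1)), i, j < m, are conjugate by the
   reversal permutation and det B = det A.  The polynomials P_0, ..., P_(m-1)
   with L[P_n^2] <> 0 make (f, g) |-> L[f g] nondegenerate on polynomials of
   degree < m, so det A <> 0.  Orthogonality of P_m gives B = A C^T for the
   companion matrix C of P_m; hence det C = 1, i.e. P_m(0) = (-1)^m = -1.
   Finally x^m P_m(1/x) is again orthogonal to all polynomials of degree < m by
   the symmetry of the moments, and its difference with P_m(0) P_m has degree
   < m, so it vanishes by nondegeneracy. *)

From HB Require Import structures.
From mathcomp Require Import all_boot all_order all_algebra all_fingroup.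
From mathcomp Require Import complex.
From mathcomp Require Import reals trigo.
From mathcomp Require Import ring zify.
Set Implicit Arguments. Unset Strict Implicit. Unset Printing Implicit Defensive.
Import Order.TTheory GRing.Theory Num.Theory.
Local Open Scope ring_scope.

Section MomentFunctional.
Variables (F : fieldType) (mu : nat -> F).
Implicit Types (Q S : {poly F}).

Definition moment_fun Q : F := \sum_(k < size Q) Q`_k * mu k.
Local Notation L := moment_fun.

Lemma moment_fun_wide n Q : (size Q <= n)%N -> L Q = \sum_(k < n) Q`_k * mu k.
Proof.
move=> hn; rewrite /L (big_ord_widen n (fun k => Q`_k * mu k) hn) big_mkcond /=.
apply: eq_bigr => k _; case: ifP => // /negbT; rewrite -leqNgt => hk.
by rewrite nth_default // mul0r.
Qed.

Lemma moment_fun_is_semilinear : semilinear_for *%R moment_fun.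
Proof.
split=> [c Q | Q S].
  rewrite (@moment_fun_wide (size Q) (c *: Q)) ?size_scale_leq // mulr_sumr.
  by apply: eq_bigr => k _; rewrite coefZ mulrA.
have hQ : (size Q <= size Q + size S)%N by rewrite leq_addr.
have hS : (size S <= size Q + size S)%N by rewrite leq_addl.
rewrite (moment_fun_wide hQ) (moment_fun_wide hS).
rewrite (@moment_fun_wide (size Q + size S) (Q + S)).
  by rewrite -big_split; apply: eq_bigr => k _; rewrite coefD mulrDl.
by rewrite (leq_trans (size_polyD _ _)) // geq_max hQ hS.
Qed.

HB.instance Definition _ :=
  GRing.isSemilinear.Build F {poly F} F *%R moment_fun moment_fun_is_semilinear.

Lemma moment_funZ c Q : L (c *: Q) = c * L Q.
Proof. exact: linearZ_LR. Qed.

Lemma moment_fun_Xn n : L 'X^n = mu n.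
Proof.
rewrite /L size_polyXn big_ord_recr /= coefXn eqxx mul1r big1 ?add0r //.
by move=> i _; rewrite coefXn (ltn_eqF (ltn_ord i)) mul0r.
Qed.

End MomentFunctional.

Lemma moment_fun_mulXn (F : fieldType) (mu : nat -> F) j (Q : {poly F}) :
  moment_fun mu (Q * 'X^j) = moment_fun (fun k => mu (k + j)%N) Q.
Proof.
rewrite -[Q in LHS]coefK poly_def mulr_suml raddf_sum.
apply: eq_bigr => k _ /=.
by rewrite -scalerAl -exprD moment_funZ moment_fun_Xn.
Qed.

Lemma size_sub_monic (R : nzRingType) (P g : {poly R}) n :
  P \is monic -> size P = n.+1 -> (size g <= n.+1)%N ->
  (size (g - g`_n *: P)%R <= n)%N.
Proof.
move=> hm hs hg; apply/leq_sizeP => j hj; rewrite coefB coefZ.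
case: (ltngtP j n) => [|hjn|->].
- by rewrite ltnNge hj.
- have hPj : (size P <= j)%N by rewrite hs.
  by rewrite (nth_default _ hPj) (nth_default _ (leq_trans hg hjn)) mulr0 subr0.
- by move/monicP: hm; rewrite lead_coefE hs => ->; rewrite mulr1 subrr.
Qed.

Definition reciprocal (R : nzRingType) n (Q : {poly R}) :=
  \poly_(j < n.+1) Q`_(n - j).

Lemma horner_reciprocal (F : fieldType) n (Q : {poly F}) x :
  (size Q <= n.+1)%N -> x != 0 -> (reciprocal n Q).[x] = x ^+ n * Q.[x^-1].
Proof.
move=> hQ hx; rewrite horner_poly (horner_coef_wide _ hQ) mulr_sumr.
rewrite (reindex_inj rev_ord_inj) /=; apply: eq_bigr => k _.
have hk : (k <= n)%N by rewrite -ltnS.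
have -> : x ^+ n = x ^+ (n - k) * x ^+ k by rewrite -exprD subnK.
rewrite subSS (subKn hk) exprVn; field.
by rewrite expf_neq0.
Qed.

Section OrthogonalPolynomials.
Variables (F : fieldType) (mu : nat -> F).
Implicit Types (P Pm f g h : {poly F}).
Local Notation L := (moment_fun mu).

Definition orth n f := forall g, (size g <= n)%N -> L (f * g) = 0.

Definition monic_orthogonal n P := [/\ P \is monic, size P = n.+1 & orth n P].

Lemma monic_orthogonal1 : monic_orthogonal 0 1.
Proof.
split; rewrite ?monic1 ?size_poly1 // => g.
by rewrite leqn0 size_poly_eq0 => /eqP ->; rewrite mulr0 raddf0.
Qed.

Lemma orth_from_monomials n f :
  (forall i, (i < n)%N -> L (f * 'X^i) = 0) -> orth n f.
Proof.
move=> hX g hg; rewrite -[g]coefK poly_def mulr_sumr raddf_sum big1 //.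
move=> i _ /=.
by rewrite -scalerAr moment_funZ hX ?mulr0 // (leq_trans (ltn_ord i)).
Qed.

Lemma moment_fun_monic_orth n P g : monic_orthogonal n P ->
  (size g <= n.+1)%N -> L (P * g) = g`_n * L (P ^+ 2).
Proof.
move=> [hm hs ho] hg.
have -> : P * g = P * (g - g`_n *: P) + g`_n *: (P ^+ 2).
  by rewrite mulrBr -scalerAr subrK.
by rewrite raddfD /= ho ?add0r ?moment_funZ // size_sub_monic.
Qed.

(* For [Pm = 0] the junk quotient [L (P ^+ 2) / 0 = 0] is harmless. *)
Definition next_orth P Pm :=
  ('X - (L ('X * P ^+ 2) / L (P ^+ 2))%:P) * P
  - (L (P ^+ 2) / L (Pm ^+ 2))%:P * Pm.

Lemma monic_orthogonal_next n P Pm :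
  monic_orthogonal n P -> L (P ^+ 2) != 0 -> (size Pm <= n)%N ->
  (forall h, (size h <= n)%N ->
     L (P * ('X * h)) = L (P ^+ 2) / L (Pm ^+ 2) * L (Pm * h)) ->
  monic_orthogonal n.+1 (next_orth P Pm).
Proof.
move=> [hm hs ho] hP2 hPm hXP.
set a := L ('X * P ^+ 2) / L (P ^+ 2); set b := L (P ^+ 2) / L (Pm ^+ 2).
have hmX : ('X - a%:P) * P \is monic by rewrite monicMl ?monicXsubC.
have hsX : size (('X - a%:P) * P) = n.+2.
  by rewrite size_monicM ?monicXsubC ?monic_neq0 // size_XsubC hs.
have hsb : (size (- (b%:P * Pm))%R < size (('X - a%:P) * P)%R)%N.
  rewrite size_polyN mul_polyC hsX ltnS (leq_trans (size_scale_leq _ _)) //.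
  exact: leq_trans hPm _.
have hP' : L (next_orth P Pm * P) = 0.
  have -> : next_orth P Pm * P = 'X * P ^+ 2 - a *: P ^+ 2 - b *: (P * Pm).
    by rewrite /next_orth -/a -/b -!mul_polyC; ring.
  by rewrite !raddfB /= !moment_funZ (ho Pm hPm) mulr0 subr0 /a divfK ?subrr.
have hh : forall h, (size h <= n)%N -> L (next_orth P Pm * h) = 0.
  move=> h hh; have -> : next_orth P Pm * h =
      P * ('X * h) - a *: (P * h) - b *: (Pm * h).
    by rewrite /next_orth -/a -/b -!mul_polyC; ring.
  by rewrite !raddfB /= !moment_funZ (ho h hh) mulr0 subr0 hXP // -/b subrr.
split.
- by rewrite monicE /next_orth lead_coefDl // -monicE.
- by rewrite /next_orth size_polyDl.
move=> g hg; have -> : next_orth P Pm * g =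
    g`_n *: (next_orth P Pm * P) + next_orth P Pm * (g - g`_n *: P).
  by rewrite mulrBr -scalerAr addrC subrK.
by rewrite raddfD /= moment_funZ hP' mulr0 add0r hh // size_sub_monic.
Qed.

Lemma monic_orthogonal_next0 P :
  monic_orthogonal 0 P -> L (P ^+ 2) != 0 -> monic_orthogonal 1 (next_orth P 0).
Proof.
move=> hP hP2; apply: monic_orthogonal_next; rewrite ?size_poly0 //.
move=> h; rewrite leqn0 size_poly_eq0 => /eqP ->.
by rewrite !mulr0 raddf0 mulr0.
Qed.

Lemma monic_orthogonal_nextS n P Pm :
  monic_orthogonal n.+1 P -> monic_orthogonal n Pm ->
  L (P ^+ 2) != 0 -> L (Pm ^+ 2) != 0 -> monic_orthogonal n.+2 (next_orth P Pm).
Proof.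
move=> hP hPm hP2 hPm2; apply: monic_orthogonal_next => //.
  by case: hPm => _ ->.
move=> h hh; have hXh : (size ('X * h)%R <= n.+2)%N.
  by rewrite (leq_trans (size_polyMleq _ _)) // size_polyX.
rewrite (moment_fun_monic_orth hP hXh) (moment_fun_monic_orth hPm hh) coefXM /=.
by field.
Qed.

Definition nondegenerate N := forall f, (size f <= N)%N -> orth N f -> f = 0.

Lemma nondegenerate_monic_orth N (Q : nat -> {poly F}) :
  (forall k, (k < N)%N -> monic_orthogonal k (Q k) /\ L (Q k ^+ 2) != 0) ->
  nondegenerate N.
Proof.
move=> hQ f hf ho; apply/eqP; apply: contraT => nz.
have hsf : size f = (size f).-1.+1 by rewrite prednK ?size_poly_gt0.
have [hmo hQ2] := hQ (size f).-1 (leq_trans (eq_leq (esym hsf)) hf).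
have hsQ : (size (Q (size f).-1) <= N)%N by case: hmo => _ -> _; rewrite -hsf.
have := ho _ hsQ; rewrite mulrC (moment_fun_monic_orth hmo) -?hsf //.
move/eqP; rewrite mulf_eq0 -lead_coefE lead_coef_eq0.
by rewrite (negbTE nz) (negbTE hQ2).
Qed.

Definition mirror_symmetric N :=
  forall i j, ((i + j).+1 = N.*2)%N -> mu i = mu j.

Definition hankel s N : 'M[F]_N := \matrix_(i, j) mu (s + (i + j))%N.

Lemma det_hankel_neq0 N : nondegenerate N -> \det (hankel 0 N) != 0.
Proof.
move=> hnd; apply/det0P => -[v nz hv].
have hv0 : rVpoly v = 0.
  apply: hnd; first exact: size_poly.
  apply: orth_from_monomials => j hj.
  rewrite moment_fun_mulXn (moment_fun_wide _ (size_poly _ _)).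
  transitivity ((v *m hankel 0 N) 0 (Ordinal hj)); last by rewrite hv mxE.
  by rewrite !mxE; apply: eq_bigr => k _; rewrite coef_rVpoly_ord !mxE.
by rewrite -(rVpolyK v) hv0 linear0 eqxx in nz.
Qed.

Lemma det_hankel_mirror N :
  mirror_symmetric N -> \det (hankel 1 N) = \det (hankel 0 N).
Proof.
move=> hsym; pose s : {perm 'I_N} := perm (@rev_ord_inj N).
have -> : hankel 1 N = row_perm s (col_perm s (hankel 0 N)).
  apply/matrixP => i j; rewrite !mxE !permE /=; apply: hsym.
  by have := ltn_ord i; have := ltn_ord j; lia.
rewrite row_permE col_permE !det_mulmx !det_perm odd_permV.
by rewrite mulrCA -signr_addb addbb expr0 mulr1.
Qed.

Lemma hankelS_companion P : P \is monic -> orth (size P).-1 P ->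
  hankel 1 (size P).-1 = hankel 0 (size P).-1 *m (companionmx P)^T.
Proof.
move=> hm ho; set d := (size P).-1.
have hsP : size P = d.+1 by rewrite prednK // size_poly_gt0 monic_neq0.
apply/matrixP => i j; rewrite !mxE; under eq_bigr => k _ do rewrite !mxE.
case: eqP => [hj | hj].
  have := ho 'X^i; rewrite size_polyXn moment_fun_mulXn => /(_ (ltn_ord i)).
  rewrite (moment_fun_wide _ (eq_leq hsP)) big_ord_recr /=.
  have -> : P`_d = 1 by move/monicP: hm; rewrite lead_coefE.
  rewrite mul1r addrC => /eqP; rewrite addr_eq0 => /eqP.
  have -> : (1 + (i + j) = d + i)%N by move: hj (ltn_ord i); rewrite -/d; lia.
  move=> ->; rewrite -sumrN; apply: eq_bigr => k _.
  by rewrite mulrN mulrC addnC.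
have hj1 : (j.+1 < d)%N.
  by move: hj (ltn_ord j); rewrite -/d; lia.
rewrite (bigD1 (Ordinal hj1)) //= eqxx mulr1 big1 ?addr0 ?addnS // => k hk.
suff /negbTE -> : j.+1 != k by rewrite mulr0.
by apply: contraNneq hk => jk; apply/eqP/val_inj.
Qed.

Lemma det_companion P : P \is monic ->
  \det (companionmx P) = (-1) ^+ (size P).-1 * P`_0.
Proof.
move=> hm; have := char_poly_det (companionmx P); rewrite companionmxK // => ->.
by rewrite mulrA -expr2 sqrr_sign mul1r.
Qed.

Lemma monic_orthogonal_coef0 N P : mirror_symmetric N -> nondegenerate N ->
  monic_orthogonal N P -> P`_0 = (-1) ^+ N.
Proof.
move=> hsym hnd [hm hs ho].
have hN : N = (size P).-1 by rewrite hs.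
rewrite hN in hsym hnd ho *.
have hC : \det (companionmx P) = 1.
  apply: (mulfI (det_hankel_neq0 hnd)).
  rewrite mulr1 -[RHS](det_hankel_mirror hsym) (hankelS_companion hm ho).
  by rewrite det_mulmx det_tr.
move: hC; rewrite det_companion // => hC.
by rewrite -[P`_0](signrMK (size P).-1) hC mulr1.
Qed.

Lemma orth_reciprocal N P : mirror_symmetric N -> (size P <= N.+1)%N ->
  orth N P -> orth N (reciprocal N P).
Proof.
move=> hsym hP ho; apply: orth_from_monomials => i hi.
have hXi : (size ('X^(N.-1 - i) : {poly F}) <= N)%N by rewrite size_polyXn; lia.
rewrite -(ho _ hXi) !moment_fun_mulXn (moment_fun_wide _ hP).
rewrite (moment_fun_wide _ (size_poly _ _)) (reindex_inj rev_ord_inj) /=.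
apply: eq_bigr => k _; have hk : (k <= N)%N by rewrite -ltnS.
rewrite subSS coef_poly ltnS leq_subr (subKn hk).
by congr (_ * _); apply: hsym; lia.
Qed.

Lemma reciprocal_monic_orthogonal N P : mirror_symmetric N -> nondegenerate N ->
  monic_orthogonal N P -> reciprocal N P = (-1) ^+ N *: P.
Proof.
move=> hsym hnd hP; rewrite -(monic_orthogonal_coef0 hsym hnd hP).
case: hP => hm hs ho.
have hPN : P`_N = 1 by move/monicP: hm; rewrite lead_coefE hs.
apply/eqP; rewrite -subr_eq0; apply/eqP; apply: hnd.
  apply/leq_sizeP => j hj; rewrite coefB coefZ coef_poly.
  case: (ltngtP j N) hj => [|hNj|->] // _.
    have hPj : (size P <= j)%N by rewrite hs.
    by rewrite ltnNge hNj (nth_default _ hPj) mulr0 subrr.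
  by rewrite ltnSn subnn hPN mulr1 subrr.
move=> g hg; rewrite mulrBl raddfB /= -scalerAl moment_funZ.
by rewrite (orth_reciprocal hsym _ ho) ?hs // ho // mulr0 subrr.
Qed.

End OrthogonalPolynomials.

Section MomentsOfH.
Variables (R : realType) (p : nat).

Lemma mu_mirror_symmetric : mirror_symmetric (mu R p) (2 * p + 1).
Proof.
move=> i j hij; have e : (i + j = 4 * p + 1)%N by rewrite -mul2n in hij; lia.
have hy : yk R p j = - yk R p i.
  have hN : (4 * p%:R + 1 : R) != 0.
    by rewrite gt_eqF // ltr_pwDr // mulr_ge0 // ler0n.
  rewrite /yk; have -> : (j%:R : R) = (4 * p + 1)%:R - i%:R.
    by rewrite -e natrD addrAC subrr add0r.
  by rewrite natrD natrM; field.
by rewrite /mu hy /Hc mulrN cosN sqrrN mulNr cosN.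
Qed.

Lemma Ppair_fst n : (Ppair R p n.+1).1 = Pn R p n.
Proof. by rewrite /Pn /=; case: (Ppair R p n). Qed.

Lemma Pn1 : Pn R p 1 = next_orth (mu R p) 1 0.
Proof. by rewrite /Pn /next_orth /= !mulr0. Qed.

Lemma PnSS n : Pn R p n.+2 = next_orth (mu R p) (Pn R p n.+1) (Pn R p n).
Proof. by rewrite -(Ppair_fst n) /Pn /=; case: (Ppair R p n). Qed.

Lemma Pn_monic_orthogonal :
  (forall n, (n < 2 * p + 1)%N -> Lfun p (Pn R p n ^+ 2) != 0) ->
  forall n, (n <= 2 * p + 1)%N -> monic_orthogonal (mu R p) n (Pn R p n).
Proof.
move=> hL; have hpair n : (n < 2 * p + 1)%N ->
    monic_orthogonal (mu R p) n (Pn R p n) /\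
    monic_orthogonal (mu R p) n.+1 (Pn R p n.+1).
  elim: n => [|n IH] hn.
    split; first exact: monic_orthogonal1.
    rewrite Pn1; apply: monic_orthogonal_next0 (hL 0%N hn).
    exact: monic_orthogonal1.
  have [hPn hPn1] := IH (ltnW hn); split => //.
  by rewrite PnSS; apply: monic_orthogonal_nextS (hL _ hn) (hL _ (ltnW hn)).
by case=> [|n] hn; [exact: monic_orthogonal1 | exact: (hpair n hn).2].
Qed.

End MomentsOfH.

Theorem proposition1 (R : realType) (p : nat) (hp : (1 <= p)%N) :
  (forall n : nat, (n < 2 * p + 1)%N -> Lfun p (Pn R p n ^+ 2) != 0) ->
  forall x : R[i], x != 0 ->
    (Pn R p (2 * p + 1)).[x] = - x ^+ (2 * p + 1) * (Pn R p (2 * p + 1)).[x^-1].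
Proof.
move=> hL x hx.
have hP := Pn_monic_orthogonal hL (leqnn _).
have hnd : nondegenerate (mu R p) (2 * p + 1).
  apply: (nondegenerate_monic_orth (Q := Pn R p)) => k hk.
  by split; [exact: Pn_monic_orthogonal (ltnW hk) | exact: hL].
have hodd : odd (2 * p + 1) by rewrite addn1 /= oddM.
have [_ hs _] := hP.
rewrite mulNr -horner_reciprocal ?hs //.
rewrite (reciprocal_monic_orthogonal (@mu_mirror_symmetric R p) hnd hP) hornerZ.
by rewrite -signr_odd hodd mulN1r opprK.
Qed.
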